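(* Let $\gamma:\mathrm{Cl}(V,h)\to\mathrm{End}_\mathbb{C}(S)$ and $\gamma':\mathrm{Cl}(V',h')\to\mathrm{End}_\mathbb{C}(S')$ be weakly-faithful complex Clifford representations. Then any isomorphism $(\varphi_0,\varphi):\gamma\to\gamma'$ of complex Clifford representations is determined by the linear isomorphism $\varphi:S\to S'$: we have $\mathrm{Ad}(\varphi)(\gamma(V))=\gamma'(V')$ and $\varphi_0=(\gamma'|_{V'})^{-1}\circ\mathrm{Ad}(\varphi)\circ\gamma|_V$. Conversely, any $\mathbb{C}$-linear isomorphism $\varphi:S\to S'$ satisfying $\mathrm{Ad}(\varphi)(\gamma(V))=\gamma'(V')$ determines an isomorphism of quadratic spaces $\varphi_0:(V,h)\to(V',h')$ through $\varphi_0=(\gamma'|_{V'})^{-1}\circ\mathrm{Ad}(\varphi)\circ\gamma|_V$, and $(\varphi_0,\varphi)$ is an isomorphism of complex Clifford representations from $\gamma$ to $\gamma'$.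
   Context: Real quadratic spaces $(V,h)$ are finite-dimensional real vector spaces with non-degenerate symmetric bilinear forms; $\mathrm{Cl}(V,h)$ is the real Clifford algebra, and an isometry $\varphi_0$ induces the unique unital algebra morphism $\mathrm{Cl}(\varphi_0)$ extending it. A complex Clifford representation is a unital morphism of real algebras $\gamma:\mathrm{Cl}(V,h)\to\mathrm{End}_\mathbb{C}(S)$, $S$ a finite-dimensional complex vector space; it is weakly-faithful if $\gamma|_V:V\to\mathrm{End}_\mathbb{C}(S)$ is injective. A morphism from $\gamma$ to $\gamma'$ is a pair $(\varphi_0,\varphi)$, $\varphi_0:(V,h)\to(V',h')$ an isometry and $\varphi:S\to S'$ $\mathbb{C}$-linear, with $\gamma'(\mathrm{Cl}(\varphi_0)(x))\circ\varphi=\varphi\circ\gamma(x)$ for all $x\in\mathrm{Cl}(V,h)$; it is an isomorphism iff $\varphi_0$ and $\varphi$ are bijective. $\mathrm{Ad}(\varphi)(A)=\varphi\circ A\circ\varphi^{-1}$. *)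

From HB Require Import structures.
From mathcomp Require Import all_boot all_order all_algebra.
From mathcomp Require Import complex reals.
Set Implicit Arguments. Unset Strict Implicit. Unset Printing Implicit Defensive.
Import Order.TTheory GRing.Theory Num.Theory.
Local Open Scope ring_scope.

Section Defs.
Variable R : realType.

Definition rc (r : R) : R[i] := Complex r 0.

Definition quad_form (V : vectType R) (h : V -> V -> R) : Prop :=
  [/\ forall (a : R) (u v w : V), h (a *: u + v) w = a * h u w + h v w,
      forall u v : V, h u v = h v u
    & forall u : V, (forall v, h u v = 0) -> u = 0].

Definition ralg_morph (A B : algType R) (F : A -> B) : Prop :=
  [/\ forall (a : R) (x y : A), F (a *: x + y) = a *: F x + F y,
      forall x y : A, F (x * y) = F x * F y
    & F 1 = 1].

(** [(A, iota)] is a (the) real Clifford algebra [Cl(V,h)]: iota is linear with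
    [iota v * iota v = h v v] and [(A, iota)] is universal for this property. *)
Definition clifford_map (V : vectType R) (h : V -> V -> R) (B : algType R)
  (f : V -> B) : Prop :=
  (forall (a : R) (u v : V), f (a *: u + v) = a *: f u + f v) /\
  (forall v : V, f v * f v = (h v v)%:A).

Definition is_clifford_algebra (V : vectType R) (h : V -> V -> R)
  (A : algType R) (iota : V -> A) : Prop :=
  clifford_map h iota /\
  forall (B : algType R) (f : V -> B), clifford_map h f ->
    exists F : A -> B, [/\ ralg_morph F, forall v, F (iota v) = f v
      & forall G : A -> B, ralg_morph G -> (forall v, G (iota v) = f v) ->
          forall x, G x = F x].

(** Complex Clifford representations: unital morphisms of real algebras
    [Cl(V,h) -> End_C(S)], the real structure on [End_C(S)] being the
    scaling by [rc r], and its product the composition. *)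
Definition clifford_rep (A : algType R) (S : vectType R[i]) (g : A -> 'End(S))
  : Prop :=
  [/\ forall (a : R) (x y : A), g (a *: x + y) = rc a *: g x + g y,
      forall x y : A, g (x * y) = (g x \o g y)%VF
    & g 1 = \1%VF].

Definition weakly_faithful (V : vectType R) (A : algType R) (iota : V -> A)
  (S : vectType R[i]) (g : A -> 'End(S)) : Prop :=
  injective (fun v => g (iota v)).

Definition quad_isometry (V V' : vectType R) (h : V -> V -> R) (h' : V' -> V' -> R)
  (phi0 : 'Hom(V, V')) : Prop :=
  forall u v : V, h' (phi0 u) (phi0 v) = h u v.

Definition is_Cl_map (V V' : vectType R) (A A' : algType R) (iota : V -> A)
  (iota' : V' -> A') (phi0 : 'Hom(V, V')) (F : A -> A') : Prop :=
  ralg_morph F /\ forall v, F (iota v) = iota' (phi0 v).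

Definition clrep_morphism (V V' : vectType R) (h : V -> V -> R)
  (h' : V' -> V' -> R) (A A' : algType R) (iota : V -> A) (iota' : V' -> A')
  (S S' : vectType R[i]) (g : A -> 'End(S)) (g' : A' -> 'End(S'))
  (phi0 : 'Hom(V, V')) (phi : 'Hom(S, S')) : Prop :=
  quad_isometry h h' phi0 /\
  forall F : A -> A', is_Cl_map iota iota' phi0 F ->
    forall x : A, (g' (F x) \o phi = phi \o g x)%VF.

Definition clrep_iso (V V' : vectType R) (h : V -> V -> R)
  (h' : V' -> V' -> R) (A A' : algType R) (iota : V -> A) (iota' : V' -> A')
  (S S' : vectType R[i]) (g : A -> 'End(S)) (g' : A' -> 'End(S'))
  (phi0 : 'Hom(V, V')) (phi : 'Hom(S, S')) : Prop :=
  [/\ clrep_morphism h h' iota iota' g g' phi0 phi,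
      bijective phi0 & bijective phi].

Definition Ad (S S' : vectType R[i]) (phi : 'Hom(S, S')) (B : 'End(S))
  : 'End(S') := (phi \o B \o phi^-1)%VF.

Definition gammaV (V : vectType R) (A : algType R) (iota : V -> A)
  (S : vectType R[i]) (g : A -> 'End(S)) : 'End(S) -> Prop :=
  fun B => exists v : V, B = g (iota v).

Definition Ad_set (S S' : vectType R[i]) (phi : 'Hom(S, S'))
  (P : 'End(S) -> Prop) : 'End(S') -> Prop :=
  fun B' => exists B, P B /\ B' = Ad phi B.

End Defs.

(** An isomorphism of weakly-faithful Clifford representations is determined by
    its spinor part [phi]: evaluating the intertwining relation on generators
    gives [gamma' (phi0 v) = Ad phi (gamma v)], and [gamma'] is injective on
    [V'].  Conversely, if [Ad phi] maps [gamma(V)] onto [gamma'(V')], this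
    relation defines a linear bijection [phi0]; it is an isometry because
    [gamma (v)^2 = h(v,v)] and [Ad phi] is an algebra morphism, and
    [(phi0, phi)] intertwines the representations because [gamma' o Cl(phi0)]
    and [Ad phi o gamma] are algebra morphisms out of [Cl(V,h)] that agree on
    [V], hence coincide by the universal property. *)
From HB Require Import structures.
From mathcomp Require Import all_boot all_order all_algebra.
From mathcomp Require Import complex reals lra boolp.
Set Implicit Arguments. Unset Strict Implicit. Unset Printing Implicit Defensive.
Import Order.TTheory GRing.Theory Num.Theory.
Local Open Scope ring_scope.

Section LinearAxiom.
Variables (K : pzRingType) (U W : lmodType K) (f : U -> W).
Hypothesis f_lin : forall a u v, f (a *: u + v) = a *: f u + f v.

Definition linear_of_axiom : {linear U -> W} :=
  HB.pack f (GRing.isLinear.Build K U W *:%R f f_lin).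

Lemma lin_axiomZ a u : f (a *: u) = a *: f u.
Proof. exact: (linearZ_LR linear_of_axiom). Qed.

End LinearAxiom.

Lemma linfun_axiomE (K : fieldType) (U W : vectType K) (f : U -> W)
    (f_lin : forall a u v, f (a *: u + v) = a *: f u + f v) :
  linfun f =1 f.
Proof. exact: (lfunE (linear_of_axiom f_lin)). Qed.

Lemma bij_surj (T U : Type) (f : T -> U) :
  bijective f -> forall y, exists x, f x = y.
Proof. by case=> k _ kK y; exists (k y). Qed.

Section LinearMaps.
Variables (K : fieldType) (U W : vectType K) (f : 'Hom(U, W)).

Lemma inj_lfunK : injective f -> cancel f f^-1%VF.
Proof. by move/lker0P; exact: lker0_lfunK. Qed.

Lemma surj_lfunVK : (forall w, exists u, f u = w) -> cancel f^-1%VF f.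
Proof.
by move=> f_surj w; have [u <-] := f_surj w; rewrite limg_lfunVK ?memv_img ?memvf.
Qed.

Lemma lfun_bijective : injective f -> (forall w, exists u, f u = w) -> bijective f.
Proof. by move=> f_inj f_surj; exists f^-1%VF; [exact: inj_lfunK | exact: surj_lfunVK]. Qed.

Lemma dim0_vect_eq0 : dim W = 0%N -> forall w : W, w = 0.
Proof.
move=> W0 w; apply/eqP; rewrite -memv0.
have fullv0 : fullv = 0%VS :> {vspace W} by apply/eqP; rewrite -dimv_eq0 dimvf W0.
by rewrite -fullv0 memvf.
Qed.

Lemma dim0_lfun_eq0 : dim W = 0%N -> f = 0.
Proof. by move=> W0; apply/lfunP => u; rewrite lfunE; exact: dim0_vect_eq0. Qed.

End LinearMaps.

Section QuadraticForm.
Variables (R : realType) (V : vectType R) (k : V -> V -> R).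
Hypothesis kq : quad_form k.

Lemma quad_formDl u v w : k (u + v) w = k u w + k v w.
Proof. by case: kq => k_lin _ _; have := k_lin 1 u v w; rewrite scale1r mul1r. Qed.

Lemma quad_form0l w : k 0 w = 0.
Proof. by have := quad_formDl 0 0 w; rewrite addr0; lra. Qed.

Lemma quad_form_polar u v : k (u + v) (u + v) = k u u + k v v + 2 * k u v.
Proof.
have [_ k_sym _] := kq.
by rewrite !quad_formDl ![k _ (u + v)]k_sym !quad_formDl (k_sym v u); lra.
Qed.

End QuadraticForm.

Section QuadraticIsometries.
Variables (R : realType) (V V' : vectType R).
Variables (h : V -> V -> R) (h' : V' -> V' -> R).
Hypotheses (hq : quad_form h) (hq' : quad_form h').

Lemma quad_isometry_diag (p : 'Hom(V, V')) :
  (forall v, h' (p v) (p v) = h v v) -> quad_isometry h h' p.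
Proof.
move=> p_diag u v; have := p_diag (u + v).
by rewrite linearD !quad_form_polar // !p_diag; lra.
Qed.

Lemma quad_isometry_trivial (p : 'Hom(V, V')) :
  (forall v : V, v = 0) -> quad_isometry h h' p.
Proof. by move=> V0 u v; rewrite (V0 u) (V0 v) linear0 !quad_form0l. Qed.

End QuadraticIsometries.

Section CliffordAlgebras.
Variables (R : realType) (V V' : vectType R).
Variables (h : V -> V -> R) (h' : V' -> V' -> R).

Lemma ralg_morph_clifford_map (A B : algType R) (iota : V -> A) (F : A -> B) :
  clifford_map h iota -> ralg_morph F -> clifford_map h (F \o iota).
Proof.
case=> iota_lin iota_sq [F_lin F_mul F1]; split=> [a u v | v] /=.
  by rewrite iota_lin F_lin.
by rewrite -F_mul iota_sq lin_axiomZ // F1.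
Qed.

Lemma clifford_algebra_morph_eq (A B : algType R) (iota : V -> A) (G1 G2 : A -> B) :
  is_clifford_algebra h iota -> ralg_morph G1 -> ralg_morph G2 ->
  (forall v, G1 (iota v) = G2 (iota v)) -> G1 =1 G2.
Proof.
case=> iota_cl univ G1_morph G2_morph eqG x.
have [F [_ _ F_uniq]] := univ _ _ (ralg_morph_clifford_map iota_cl G1_morph).
by rewrite (F_uniq G1) // (F_uniq G2) // => v; rewrite /= eqG.
Qed.

Lemma clifford_map_comp_isometry (B : algType R) (f : V' -> B) (phi0 : 'Hom(V, V')) :
  clifford_map h' f -> quad_isometry h h' phi0 -> clifford_map h (f \o phi0).
Proof.
case=> f_lin f_sq phi0_iso; split=> [a u v | v] /=; first by rewrite linearP f_lin.
by rewrite f_sq phi0_iso.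
Qed.

Lemma Cl_map_exists (A A' : algType R) (iota : V -> A) (iota' : V' -> A')
    (phi0 : 'Hom(V, V')) :
  is_clifford_algebra h iota -> clifford_map h' iota' ->
  quad_isometry h h' phi0 -> exists F, is_Cl_map iota iota' phi0 F.
Proof.
move=> [_ univ] iota'_cl phi0_iso.
by have [F [F_morph Fiota _]] := univ _ _ (clifford_map_comp_isometry iota'_cl phi0_iso); exists F.
Qed.

Lemma quad_isometry_of_clifford_maps (B : algType R) (f : V -> B) (f' : V' -> B)
    (phi0 : 'Hom(V, V')) :
  quad_form h -> quad_form h' -> clifford_map h f -> clifford_map h' f' ->
  (forall v, f' (phi0 v) = f v) -> quad_isometry h h' phi0.
Proof.
move=> hq hq' [_ f_sq] [_ f'_sq] eqf; apply: quad_isometry_diag => // v.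
by apply: (fmorph_inj (in_alg B)); rewrite /= -f_sq -f'_sq eqf.
Qed.

End CliffordAlgebras.

(** [End_C(S)] as a real algebra, with composition as product; the library's
    [lfun_algType] uses the opposite product and complex scalars.  The ring
    structure needs [S <> 0], which forces case splits on [dim S] below. *)
Section RealEndomorphisms.
Variables (R : realType) (S : vectType R[i]).
Hypothesis S_proper : (0 < dim S)%N.

Definition realEnd of (0 < dim S)%N : Type := 'End(S).
Local Notation End_R := (realEnd S_proper).

HB.instance Definition _ := GRing.Zmodule.on End_R.
HB.instance Definition _ : GRing.Zmodule_isNzRing End_R :=
  lfun_comp_nzRingMixin S_proper.

Definition realEnd_scale (a : R) (f : End_R) : End_R := rc a *: (f : 'End(S)).

Lemma rcE : @rc R =1 real_complex R. Proof. by []. Qed.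

Fact realEnd_scaleA a b f :
  realEnd_scale a (realEnd_scale b f) = realEnd_scale (a * b) f.
Proof. by rewrite /realEnd_scale scalerA !rcE rmorphM. Qed.

Fact realEnd_scale1 : left_id 1 realEnd_scale.
Proof. by move=> f; rewrite /realEnd_scale rcE rmorph1 scale1r. Qed.

Fact realEnd_scaleDr : right_distributive realEnd_scale +%R.
Proof. by move=> a f f'; exact: scalerDr. Qed.

Fact realEnd_scaleDl f : {morph realEnd_scale^~ f : a b / a + b}.
Proof. by move=> a b; rewrite /realEnd_scale !rcE rmorphD scalerDl. Qed.

HB.instance Definition _ := GRing.Zmodule_isLmodule.Build R End_R
  realEnd_scaleA realEnd_scale1 realEnd_scaleDr realEnd_scaleDl.
HB.instance Definition _ := GRing.Lmodule_isLalgebra.Build R End_R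
  (fun a f f' => comp_lfunZl (rc a) f f').
HB.instance Definition _ := GRing.Lalgebra_isAlgebra.Build R End_R
  (fun a f f' => comp_lfunZr (rc a) f f').

Lemma clifford_rep_ralg_morph (A : algType R) (g : A -> 'End(S)) :
  clifford_rep g -> ralg_morph (g : A -> End_R).
Proof. by []. Qed.

End RealEndomorphisms.

Section Conjugation.
Variables (R : realType) (S S' : vectType R[i]) (phi : 'Hom(S, S')).
Hypothesis phi_bij : bijective phi.

Let phiK := inj_lfunK (bij_inj phi_bij).
Let phiVK := surj_lfunVK (bij_surj phi_bij).

Lemma Ad_is_linear c B C : Ad phi (c *: B + C) = c *: Ad phi B + Ad phi C.
Proof. by apply/lfunP => w; rewrite /Ad !(comp_lfunE, add_lfunE, scale_lfunE) linearP. Qed.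

Lemma Ad_comp B C : Ad phi (B \o C)%VF = (Ad phi B \o Ad phi C)%VF.
Proof. by apply/lfunP => w; rewrite /Ad !comp_lfunE phiK. Qed.

Lemma Ad_id : Ad phi \1%VF = \1%VF.
Proof. by apply/lfunP => w; rewrite /Ad !comp_lfunE !id_lfunE phiVK. Qed.

Lemma Ad_inj : injective (Ad phi).
Proof.
move=> B C /lfunP eqAd; apply/lfunP => u; apply: (bij_inj phi_bij).
by have := eqAd (phi u); rewrite /Ad !comp_lfunE phiK.
Qed.

Lemma eq_Ad_comp B C : C = Ad phi B <-> (C \o phi = phi \o B)%VF.
Proof.
split=> [-> | eqC]; first by apply/lfunP => u; rewrite /Ad !comp_lfunE phiK.
apply/lfunP => w; rewrite /Ad -[w in LHS]phiVK !comp_lfunE.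
by have /lfunP/(_ (phi^-1%VF w)) := eqC; rewrite !comp_lfunE.
Qed.

End Conjugation.

Section CliffordRepresentations.
Variables (R : realType) (A : algType R) (S : vectType R[i]) (g : A -> 'End(S)).
Hypothesis hg : clifford_rep g.

Lemma clifford_rep_comp (A0 : algType R) (F : A0 -> A) :
  ralg_morph F -> clifford_rep (g \o F).
Proof.
case: hg => g_lin g_mul g1 [F_lin F_mul F1].
by split=> [a x y | x y |] /=; rewrite ?F_lin ?F_mul ?F1.
Qed.

Lemma clifford_rep_Ad (S' : vectType R[i]) (phi : 'Hom(S, S')) :
  bijective phi -> clifford_rep (Ad phi \o g).
Proof.
case: hg => g_lin g_mul g1 phi_bij; split=> [a x y | x y |] /=.
- by rewrite g_lin Ad_is_linear.
- by rewrite g_mul Ad_comp.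
- by rewrite g1 Ad_id.
Qed.

Lemma clifford_rep_gen_linear (V : vectType R) (h : V -> V -> R) (iota : V -> A) :
  clifford_map h iota ->
  forall a u v, g (iota (a *: u + v)) = rc a *: g (iota u) + g (iota v).
Proof. by case: hg => g_lin _ _ [iota_lin _] a u v; rewrite iota_lin g_lin. Qed.

Lemma weakly_faithful_dim0 (V : vectType R) (iota : V -> A) :
  weakly_faithful iota g -> dim S = 0%N -> forall v : V, v = 0.
Proof.
move=> wf S0 v; apply: wf => /=.
by rewrite [LHS](dim0_lfun_eq0 _ S0) [RHS](dim0_lfun_eq0 _ S0).
Qed.

End CliffordRepresentations.

Section Morphisms.
Variables (R : realType) (V V' : vectType R).
Variables (h : V -> V -> R) (h' : V' -> V' -> R).
Variables (A A' : algType R) (iota : V -> A) (iota' : V' -> A').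
Variables (S S' : vectType R[i]) (g : A -> 'End(S)) (g' : A' -> 'End(S')).
Hypotheses (hA : is_clifford_algebra h iota) (hA' : is_clifford_algebra h' iota').
Hypotheses (hg : clifford_rep g) (hg' : clifford_rep g').
Variables (phi0 : 'Hom(V, V')) (phi : 'Hom(S, S')).
Hypothesis phi_bij : bijective phi.

Lemma clrep_morphism_gen :
  clrep_morphism h h' iota iota' g g' phi0 phi ->
  forall v, g' (iota' (phi0 v)) = Ad phi (g (iota v)).
Proof.
case=> phi0_iso intertw v; have [F [F_morph Fiota]] := Cl_map_exists hA hA'.1 phi0_iso.
by apply/eq_Ad_comp => //; rewrite -Fiota; exact: intertw.
Qed.

Lemma clrep_morphism_of_gen :
  quad_isometry h h' phi0 ->
  (forall v, g' (iota' (phi0 v)) = Ad phi (g (iota v))) ->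
  clrep_morphism h h' iota iota' g g' phi0 phi.
Proof.
move=> phi0_iso eq_gen; split=> // F [F_morph Fiota] x.
have [S'0 | S'_proper] := posnP (dim S').
  by rewrite [LHS](dim0_lfun_eq0 _ S'0) [RHS](dim0_lfun_eq0 _ S'0).
apply/eq_Ad_comp => //.
suff eqG : (g' \o F : A -> realEnd S'_proper) =1 Ad phi \o g by exact: eqG.
apply: (clifford_algebra_morph_eq hA) => [||v].
- exact/clifford_rep_ralg_morph/clifford_rep_comp.
- exact/clifford_rep_ralg_morph/clifford_rep_Ad.
- by rewrite /= Fiota eq_gen.
Qed.

Lemma Ad_set_gammaV :
  (forall v, g' (iota' (phi0 v)) = Ad phi (g (iota v))) ->
  (forall v', exists v, phi0 v = v') ->
  Ad_set phi (gammaV iota g) = gammaV iota' g'.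
Proof.
move=> eq_gen phi0_surj; apply: funext => B'; apply: propext; split.
  by case=> _ [[v ->] ->]; exists (phi0 v); rewrite eq_gen.
case=> v' ->; have [v <-] := phi0_surj v'.
by exists (g (iota v)); split; [exists v | rewrite eq_gen].
Qed.

End Morphisms.

Section Converse.
Variables (R : realType) (V V' : vectType R).
Variables (h : V -> V -> R) (h' : V' -> V' -> R).
Hypotheses (hq : quad_form h) (hq' : quad_form h').
Variables (A A' : algType R) (iota : V -> A) (iota' : V' -> A').
Hypotheses (hA : is_clifford_algebra h iota) (hA' : is_clifford_algebra h' iota').
Variables (S S' : vectType R[i]) (g : A -> 'End(S)) (g' : A' -> 'End(S')).
Hypotheses (hg : clifford_rep g) (hg' : clifford_rep g').
Hypotheses (wf : weakly_faithful iota g) (wf' : weakly_faithful iota' g').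
Variable phi : 'Hom(S, S').
Hypotheses (phi_bij : bijective phi)
  (Ad_gammaV : Ad_set phi (gammaV iota g) = gammaV iota' g').

Lemma Ad_gen_lift v : exists v', g' (iota' v') == Ad phi (g (iota v)).
Proof.
have : gammaV iota' g' (Ad phi (g (iota v))).
  by rewrite -Ad_gammaV; exists (g (iota v)); split=> //; exists v.
by case=> v' ->; exists v'.
Qed.

Let lift v := xchoose (Ad_gen_lift v).

Let liftE v : g' (iota' (lift v)) = Ad phi (g (iota v)).
Proof. exact/eqP/(xchooseP (Ad_gen_lift v)). Qed.

Let lift_is_linear a u v : lift (a *: u + v) = a *: lift u + lift v.
Proof.
apply: wf' => /=.
by rewrite (clifford_rep_gen_linear hg' hA'.1) !liftE (clifford_rep_gen_linear hg hA.1) Ad_is_linear.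
Qed.

Let phi0 : 'Hom(V, V') := linfun lift.

Let phi0E v : g' (iota' (phi0 v)) = Ad phi (g (iota v)).
Proof. by rewrite linfun_axiomE. Qed.

Let phi0_bij : bijective phi0.
Proof.
apply: lfun_bijective => [u v eq_uv | v'].
  by apply: wf; apply: (Ad_inj phi_bij); rewrite /= -!phi0E eq_uv.
have : Ad_set phi (gammaV iota g) (g' (iota' v')) by rewrite Ad_gammaV; exists v'.
by case=> _ [[v ->] eqv]; exists v; apply: wf'; rewrite /= phi0E eqv.
Qed.

Let phi0_isometry : quad_isometry h h' phi0.
Proof.
have [S'0 | S'_proper] := posnP (dim S').
  apply: quad_isometry_trivial => // v; apply: (bij_inj phi0_bij).
  by rewrite linear0; exact: (weakly_faithful_dim0 wf' S'0 (phi0 v)).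
apply: (@quad_isometry_of_clifford_maps _ _ _ _ _ (realEnd S'_proper)
  (Ad phi \o g \o iota) (g' \o iota') _ hq hq' _ _ phi0E).
- exact: ralg_morph_clifford_map hA.1 (clifford_rep_ralg_morph _ (clifford_rep_Ad hg phi_bij)).
- exact: ralg_morph_clifford_map hA'.1 (clifford_rep_ralg_morph _ hg').
Qed.

Lemma Ad_gammaV_clrep_iso :
  exists phi0 : 'Hom(V, V'),
    [/\ forall v : V, g' (iota' (phi0 v)) = Ad phi (g (iota v)),
        forall psi0 : 'Hom(V, V'),
          (forall v : V, g' (iota' (psi0 v)) = Ad phi (g (iota v))) ->
          psi0 = phi0,
        quad_isometry h h' phi0, bijective phi0
      & clrep_iso h h' iota iota' g g' phi0 phi].
Proof.
exists phi0; split=> //.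
  by move=> psi0 psi0E; apply/lfunP => v; apply: wf'; rewrite /= psi0E phi0E.
by split=> //; exact: clrep_morphism_of_gen.
Qed.

End Converse.

Theorem proposition3p6 (R : realType)
  (V V' : vectType R) (h : V -> V -> R) (h' : V' -> V' -> R)
  (hq : quad_form h) (hq' : quad_form h')
  (A A' : algType R) (iota : V -> A) (iota' : V' -> A')
  (hA : is_clifford_algebra h iota) (hA' : is_clifford_algebra h' iota')
  (S S' : vectType R[i]) (g : A -> 'End(S)) (g' : A' -> 'End(S'))
  (hg : clifford_rep g) (hg' : clifford_rep g')
  (wf : weakly_faithful iota g) (wf' : weakly_faithful iota' g') :
  (forall (phi0 : 'Hom(V, V')) (phi : 'Hom(S, S')),
     clrep_iso h h' iota iota' g g' phi0 phi ->
     Ad_set phi (gammaV iota g) = gammaV iota' g' /\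
     (forall v : V, g' (iota' (phi0 v)) = Ad phi (g (iota v))))
  /\
  (forall phi : 'Hom(S, S'), bijective phi ->
     Ad_set phi (gammaV iota g) = gammaV iota' g' ->
     exists phi0 : 'Hom(V, V'),
       [/\ forall v : V, g' (iota' (phi0 v)) = Ad phi (g (iota v)),
           forall psi0 : 'Hom(V, V'),
             (forall v : V, g' (iota' (psi0 v)) = Ad phi (g (iota v))) ->
             psi0 = phi0,
           quad_isometry h h' phi0, bijective phi0
         & clrep_iso h h' iota iota' g g' phi0 phi]).
Proof.
split=> [phi0 phi [phi_mor phi0_bij phi_bij] | phi phi_bij Ad_gammaV].
  have phi0E := clrep_morphism_gen hA hA' phi_bij phi_mor.
  by split=> //; exact: Ad_set_gammaV phi0E (bij_surj phi0_bij).
exact: Ad_gammaV_clrep_iso.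
Qed.
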